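(* Let $\omega$ be a primitive third root of unity, $S=\mathbb{C}\langle x,y,z\rangle/(x^2,y^2,z^2)$, and for $[A:B]\in\mathbb{P}^1$ let $T_{[A:B]}$ be the quotient of $S$ by the two-sided ideal generated by $$A(zxy+\omega xyz+\omega^2 yzx)+B(yxz+\omega zyx+\omega^2 xzy),\qquad A(zxy+\omega^2 xyz+\omega yzx)+B(yxz+\omega^2 zyx+\omega xzy).$$ Let the Heisenberg group $H_3$ act on $T_{[A:B]}$ by the graded automorphisms determined by $e_1\cdot x=z,\ e_1\cdot y=x,\ e_1\cdot z=y$ and $e_2\cdot x=x,\ e_2\cdot y=\omega y,\ e_2\cdot z=\omega^2 z$. Then for every $[A:B]\in\mathbb{P}^1$ there exists a nonzero central element of degree 3 in $T_{[A:B]}$ which is fixed by $H_3$.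
   Context: $H_3=\langle e_1,e_2\mid [e_1,e_2]\text{ central},\ e_1^3=e_2^3=1\rangle$ is the Heisenberg group of order 27. The given action preserves the defining ideal, so it induces an action on $T_{[A:B]}$. In the paper the parametrization is written via $t=B/A\in\mathbb{P}^1$ (points of the diagonal $\Delta\subset\mathbb{P}^1\times\mathbb{P}^1$). *)

(* Noncommutative polynomials in three variables x,y,z
   (letters 0,1,2 of 'I_3) over a commutative ring K are represented as
   formal finite sums: lists of (coefficient, word). Two formal sums are
   equal as elements of K<x,y,z> iff their coefficient functions agree. *)
From HB Require Import structures.
From mathcomp Require Import all_boot all_order all_algebra.
From mathcomp Require Export complex.
From mathcomp Require Export reals.
Set Implicit Arguments. Unset Strict Implicit. Unset Printing Implicit Defensive.
Import Order.TTheory GRing.Theory Num.Theory.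
Local Open Scope ring_scope.

Definition word := seq 'I_3.
Definition ncpoly (K : Type) := seq (K * word).

Section NC.
Variable K : comNzRingType.

Definition ncoef (p : ncpoly K) (w : word) : K :=
  \sum_(t <- p | t.2 == w) t.1.

Definition nceq (p q : ncpoly K) : Prop := forall w, ncoef p w = ncoef q w.

Definition ncadd (p q : ncpoly K) : ncpoly K := p ++ q.
Definition ncscale (c : K) (p : ncpoly K) : ncpoly K :=
  [seq (c * t.1, t.2) | t <- p].
Definition ncsub (p q : ncpoly K) : ncpoly K := ncadd p (ncscale (-1) q).
Definition ncmul (p q : ncpoly K) : ncpoly K :=
  [seq (a.1 * b.1, a.2 ++ b.2) | a <- p, b <- q].
Definition ncmon (c : K) (w : word) : ncpoly K := [:: (c, w)].

Definition nchomog (n : nat) (p : ncpoly K) : bool := all (fun t => size t.2 == n) p.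

(* membership in the two-sided ideal generated by the list rels:
   p equals a finite sum of terms  c * u * r * v  with r in rels,
   u, v words (this is the ideal generated, since K<x,y,z> is spanned
   by words). *)
Definition in_ideal (rels : seq (ncpoly K)) (p : ncpoly K) : Prop :=
  exists l : seq (K * word * ncpoly K * word),
    all (fun t => t.1.2 \in rels) l /\
    nceq p (flatten [seq ncmul (ncmul (ncmon t.1.1.1 t.1.1.2) t.1.2) (ncmon 1 t.2)
                    | t <- l]).

Definition e1_letter (i : 'I_3) : 'I_3 :=
  if val i == 0%N then inord 2 else if val i == 1%N then inord 0 else inord 1.
Definition act_e1 (p : ncpoly K) : ncpoly K := [seq (t.1, map e1_letter t.2) | t <- p].
Definition act_e2 (om : K) (p : ncpoly K) : ncpoly K :=
  [seq (t.1 * \prod_(i <- t.2) om ^+ val i, t.2) | t <- p].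

(* action of a word in the generators e1 (true) and e2 (false);
   the word [:: g1; ...; gk] acts as g1 . g2 . ... . gk *)
Fixpoint act_gens (om : K) (s : seq bool) (p : ncpoly K) : ncpoly K :=
  match s with
  | [::] => p
  | g :: s' => (if g then act_e1 else act_e2 om) (act_gens om s' p)
  end.

Definition X : word := [:: inord 0].
Definition Y : word := [:: inord 1].
Definition Z : word := [:: inord 2].

Definition T_rels (om A B : K) : seq (ncpoly K) :=
  [:: ncmon 1 (X ++ X); ncmon 1 (Y ++ Y); ncmon 1 (Z ++ Z);
      [:: (A, Z ++ X ++ Y); (A * om, X ++ Y ++ Z); (A * om ^+ 2, Y ++ Z ++ X);
          (B, Y ++ X ++ Z); (B * om, Z ++ Y ++ X); (B * om ^+ 2, X ++ Z ++ Y)];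
      [:: (A, Z ++ X ++ Y); (A * om ^+ 2, X ++ Y ++ Z); (A * om, Y ++ Z ++ X);
          (B, Y ++ X ++ Z); (B * om ^+ 2, Z ++ Y ++ X); (B * om, X ++ Z ++ Y)]].

End NC.

From HB Require Import structures.
From mathcomp Require Import all_boot all_order all_algebra.
From mathcomp Require Import complex reals.
From mathcomp Require Import ring zify.
From Stdlib Require Import Classical.
Set Implicit Arguments. Unset Strict Implicit. Unset Printing Implicit Defensive.
Import GRing.Theory Num.Theory.
Local Open Scope ring_scope.

(* The element is f = 2A(xyz + yzx + zxy) + 2B(xzy + zyx + yxz).  It is fixed
   by e1, which permutes each of the two cyclic triples of words, and by e2,
   which scales every word of f by om^3 = 1.  For each letter l one can write
   f = a r1 + b r2 + (l u + u l) with r1, r2 the cubic relations, and then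
   l f - f l = a [l, r1] + b [l, r2] + (l^2 u - u l^2) lies in the ideal; as
   the letters generate, f is central.  Finally, the sum of the coefficients
   of xyz, yzx, zxy vanishes on the ideal: multiples of the squares only
   contain words with a repeated letter, proper multiples of r1, r2 have
   degree > 3, and on r1, r2 it is A (1 + om + om^2) = 0.  It takes the value
   6A on f, and symmetrically 6B for xzy, zyx, yxz; so f is not in the ideal. *)

Section FreeAlgebra.
Variable K : comNzRingType.
Implicit Types (p q : ncpoly K) (u v w : word).

Lemma ncoefE p w : ncoef p w = \sum_(t <- p) t.1 * (t.2 == w)%:R.
Proof.
rewrite /ncoef big_mkcond /=; apply: eq_bigr => t _.
by case: (t.2 == w); rewrite ?mulr1 ?mulr0.
Qed.

Lemma ncoef_nil w : ncoef [::] w = 0 :> K.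
Proof. by rewrite /ncoef big_nil. Qed.

Lemma ncoef_cons t p w : ncoef (t :: p) w = t.1 * (t.2 == w)%:R + ncoef p w.
Proof. by rewrite !ncoefE big_cons. Qed.

Lemma ncoef_cat p q w : ncoef (p ++ q) w = ncoef p w + ncoef q w.
Proof. by rewrite /ncoef big_cat. Qed.

Lemma ncoef_scale c p w : ncoef (ncscale c p) w = c * ncoef p w.
Proof.
by rewrite !ncoefE big_map big_distrr; apply: eq_bigr => t _ /=; rewrite mulrA.
Qed.

Lemma ncoef_sub p q w : ncoef (ncsub p q) w = ncoef p w - ncoef q w.
Proof. by rewrite /ncsub /ncadd ncoef_cat ncoef_scale mulN1r. Qed.

Lemma ncoef_flatten (ps : seq (ncpoly K)) w :
  ncoef (flatten ps) w = \sum_(p <- ps) ncoef p w.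
Proof. by rewrite /ncoef big_flatten. Qed.

Lemma ncoef_map_word (g : word -> word) p w :
  ncoef [seq (t.1, g t.2) | t <- p] w = \sum_(t <- p) t.1 * (g t.2 == w)%:R.
Proof. by rewrite ncoefE big_map. Qed.

Lemma ncoef_mul p q w : ncoef (ncmul p q) w =
  \sum_(a <- p) \sum_(b <- q) a.1 * b.1 * (a.2 ++ b.2 == w)%:R.
Proof. by rewrite ncoefE /ncmul big_allpairs_dep. Qed.

Lemma nceq_map_word (g : word -> word) p q : injective g -> nceq p q ->
  nceq [seq (t.1, g t.2) | t <- p] [seq (t.1, g t.2) | t <- q].
Proof.
move=> g_inj pq w; rewrite /ncoef !big_map /=.
have [[v <-]|not_img] := classic (exists v, g v = w).
  rewrite (eq_bigl (fun t => t.2 == v)) => [|t]; last by rewrite inj_eq.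
  rewrite [RHS](eq_bigl (fun t => t.2 == v)) => [|t]; last by rewrite inj_eq.
  exact: pq.
by rewrite !big1 // => t /eqP gtw; case: not_img; exists t.2.
Qed.

Lemma cat_injr u : injective (cat u).
Proof. by move=> v v' /eqP; rewrite eqseq_cat // => /andP[_ /eqP]. Qed.

Lemma cat_injl v : injective (cat^~ v).
Proof.
move=> u u' uv; have size_u : size u = size u'.
  by move: (congr1 size uv); rewrite !size_cat => /addIn.
by move/eqP: uv; rewrite eqseq_cat // => /andP[/eqP].
Qed.

Definition lmulw u p : ncpoly K := [seq (t.1, u ++ t.2) | t <- p].
Definition rmulw v p : ncpoly K := [seq (t.1, t.2 ++ v) | t <- p].

Lemma nceq_lmulw_mon u p : nceq (lmulw u p) (ncmul (ncmon 1 u) p).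
Proof.
move=> w; rewrite ncoef_mul big_cons big_nil addr0 ncoef_map_word.
by apply: eq_bigr => t _; rewrite mul1r.
Qed.

Lemma nceq_rmulw_mon v p : nceq (rmulw v p) (ncmul p (ncmon 1 v)).
Proof.
move=> w; rewrite ncoef_mul (ncoef_map_word (cat^~ v)).
by apply: eq_bigr => t _; rewrite big_cons big_nil addr0 mulr1.
Qed.

Definition wcomm u p : ncpoly K := ncsub (lmulw u p) (rmulw u p).

Lemma wcomm_nceq u p q : nceq p q -> nceq (wcomm u p) (wcomm u q).
Proof.
move=> pq w; rewrite !ncoef_sub (nceq_map_word (@cat_injr u) pq).
by rewrite (nceq_map_word (@cat_injl u) pq).
Qed.

Lemma wcomm_cat u p q : nceq (wcomm u (p ++ q)) (wcomm u p ++ wcomm u q).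
Proof.
by move=> w; rewrite ncoef_cat !ncoef_sub /lmulw /rmulw !map_cat !ncoef_cat; ring.
Qed.

Lemma wcomm_nil p : nceq (wcomm [::] p) [::].
Proof.
move=> w; rewrite ncoef_sub ncoef_nil /lmulw /rmulw.
rewrite ncoef_map_word (ncoef_map_word (cat^~ [::])).
apply/eqP; rewrite subr_eq0; apply/eqP.
by apply: eq_bigr => t _; rewrite cats0.
Qed.

Lemma wcomm_cons a u p :
  nceq (wcomm (a :: u) p) (lmulw [:: a] (wcomm u p) ++ rmulw u (wcomm [:: a] p)).
Proof.
move=> w; rewrite /wcomm /lmulw /rmulw /ncsub /ncadd /ncscale !map_cat -!map_comp.
rewrite !ncoef_cat !ncoefE !big_map -!big_split.
by apply: eq_bigr => t _ /=; rewrite -!catA /=; ring.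
Qed.

Lemma wcomm_anticomm a q : nceq (wcomm [:: a] (lmulw [:: a] q ++ rmulw [:: a] q))
  (ncsub (lmulw [:: a; a] q) (rmulw [:: a; a] q)).
Proof.
move=> w; rewrite /wcomm /lmulw /rmulw /ncsub /ncadd /ncscale !map_cat -!map_comp.
rewrite !ncoef_cat !ncoefE !big_map -!big_split.
by apply: eq_bigr => t _ /=; rewrite -!catA /=; ring.
Qed.

Lemma ncmul_comm_wcomm p q : nceq (ncsub (ncmul q p) (ncmul p q))
  (flatten [seq ncscale t.1 (wcomm t.2 p) | t <- q]).
Proof.
move=> w; rewrite ncoef_sub ncoef_flatten !ncoef_mul big_map.
rewrite [X in _ - X]exchange_big /= -sumrB; apply: eq_bigr => t _.
rewrite ncoef_scale ncoef_sub /lmulw /rmulw ncoef_map_word.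
rewrite (ncoef_map_word (cat^~ t.2)) mulrBr !big_distrr /=.
congr (_ - _); apply: eq_bigr => b _; first by rewrite mulrA.
by rewrite mulrA [b.1 * t.1]mulrC.
Qed.

End FreeAlgebra.

Section Ideal.
Variables (K : comNzRingType) (rels : seq (ncpoly K)).
Implicit Types (p q r : ncpoly K) (u v w : word).

Lemma ideal_termE (c : K) u r v :
  ncmul (ncmul (ncmon c u) r) (ncmon 1 v) = [seq (c * b.1 * 1, (u ++ b.2) ++ v) | b <- r].
Proof. by rewrite /ncmul /ncmon /= cats0; elim: r => //= b r ->. Qed.

Lemma in_ideal_nceq p q : nceq p q -> in_ideal rels q -> in_ideal rels p.
Proof. by move=> pq [l [rels_l q_l]]; exists l; split => // w; rewrite pq. Qed.

Lemma in_ideal_nil : in_ideal rels [::].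
Proof. by exists [::]. Qed.

Lemma in_ideal_rel r : r \in rels -> in_ideal rels r.
Proof.
move=> r_rel; exists [:: (1, [::], r, [::])]; split; first by rewrite /= r_rel.
move=> w; rewrite /= ideal_termE cats0 !ncoefE big_map.
by apply: eq_bigr => b _ /=; rewrite cats0 mul1r mulr1.
Qed.

Lemma in_ideal_cat p q : in_ideal rels p -> in_ideal rels q -> in_ideal rels (p ++ q).
Proof.
move=> [l1 [rels1 p_l1]] [l2 [rels2 q_l2]]; exists (l1 ++ l2).
by rewrite all_cat rels1 rels2; split => // w; rewrite map_cat flatten_cat !ncoef_cat p_l1 q_l2.
Qed.

Lemma in_ideal_flatten (ps : seq (ncpoly K)) :
  (forall p, p \in ps -> in_ideal rels p) -> in_ideal rels (flatten ps).
Proof.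
elim: ps => [_|p ps IHps ps_ideal] /=; first exact: in_ideal_nil.
by apply: in_ideal_cat; [apply: ps_ideal; rewrite mem_head | apply: IHps => q q_ps;
  apply: ps_ideal; rewrite inE q_ps orbT].
Qed.

Lemma in_ideal_scale c p : in_ideal rels p -> in_ideal rels (ncscale c p).
Proof.
move=> [l [rels_l p_l]]; exists [seq (c * t.1.1.1, t.1.1.2, t.1.2, t.2) | t <- l].
split; first by rewrite all_map.
move=> w; rewrite ncoef_scale p_l -ncoef_scale /ncscale map_flatten -!map_comp.
congr (ncoef (flatten _)); apply: eq_map => -[[[c' u] r] v] /=.
by rewrite !ideal_termE -map_comp; apply: eq_map => b /=; rewrite !mulrA.
Qed.

Lemma in_ideal_lmulw u p : in_ideal rels p -> in_ideal rels (lmulw u p).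
Proof.
move=> [l [rels_l p_l]]; exists [seq (t.1.1.1, u ++ t.1.1.2, t.1.2, t.2) | t <- l].
split; first by rewrite all_map.
move=> w; rewrite (nceq_map_word (@cat_injr u) p_l) /lmulw map_flatten -!map_comp.
congr (ncoef (flatten _)); apply: eq_map => -[[[c u'] r] v] /=.
by rewrite !ideal_termE -map_comp; apply: eq_map => b /=; rewrite !catA.
Qed.

Lemma in_ideal_rmulw v p : in_ideal rels p -> in_ideal rels (rmulw v p).
Proof.
move=> [l [rels_l p_l]]; exists [seq (t.1.1.1, t.1.1.2, t.1.2, t.2 ++ v) | t <- l].
split; first by rewrite all_map.
move=> w; rewrite (nceq_map_word (@cat_injl v) p_l) /rmulw map_flatten -!map_comp.
congr (ncoef (flatten _)); apply: eq_map => -[[[c u] r] v'] /=.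
by rewrite !ideal_termE -map_comp; apply: eq_map => b /=; rewrite !catA.
Qed.

Lemma in_ideal_sub p q : in_ideal rels p -> in_ideal rels q -> in_ideal rels (ncsub p q).
Proof. by move=> p_ideal q_ideal; apply: in_ideal_cat => //; apply: in_ideal_scale. Qed.

Lemma in_ideal_mull p q : in_ideal rels p -> in_ideal rels (ncmul q p).
Proof.
move=> p_ideal; apply: in_ideal_flatten => _ /mapP[a _ ->].
have -> : [seq (a.1 * b.1, a.2 ++ b.2) | b <- p] = ncscale a.1 (lmulw a.2 p).
  by rewrite /ncscale /lmulw -map_comp.
exact/in_ideal_scale/in_ideal_lmulw.
Qed.

Lemma in_ideal_mulr p q : in_ideal rels p -> in_ideal rels (ncmul p q).
Proof.
move=> p_ideal.
have pq_split : nceq (ncmul p q) (flatten [seq ncscale b.1 (rmulw b.2 p) | b <- q]).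
  move=> w; rewrite ncoef_flatten ncoef_mul big_map exchange_big /=.
  apply: eq_bigr => b _; rewrite ncoef_scale /rmulw (ncoef_map_word (cat^~ b.2)).
  by rewrite big_distrr; apply: eq_bigr => a _ /=; rewrite mulrCA mulrA.
apply: in_ideal_nceq pq_split _; apply: in_ideal_flatten => _ /mapP[b _ ->].
exact/in_ideal_scale/in_ideal_rmulw.
Qed.

Lemma in_ideal_wcomm u p : in_ideal rels p -> in_ideal rels (wcomm u p).
Proof. by move=> p_ideal; apply: in_ideal_sub; [apply: in_ideal_lmulw | apply: in_ideal_rmulw]. Qed.

Lemma in_ideal_central p : (forall a, in_ideal rels (wcomm [:: a] p)) ->
  forall q, in_ideal rels (ncsub (ncmul q p) (ncmul p q)).
Proof.
move=> letters q; apply: in_ideal_nceq (ncmul_comm_wcomm p q) _.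
apply: in_ideal_flatten => _ /mapP[t _ ->]; apply: in_ideal_scale.
elim: t.2 => [|a u IHu]; first exact: in_ideal_nceq (wcomm_nil p) in_ideal_nil.
apply: in_ideal_nceq (wcomm_cons a u p) _.
by apply: in_ideal_cat; [apply: in_ideal_lmulw | apply: in_ideal_rmulw].
Qed.

Lemma in_ideal_wcomm_letter a p s q : ncmon 1 [:: a; a] \in rels ->
  in_ideal rels s -> nceq p (s ++ (lmulw [:: a] q ++ rmulw [:: a] q)) ->
  in_ideal rels (wcomm [:: a] p).
Proof.
move=> sq_rel s_ideal p_split; have sq_ideal := in_ideal_rel sq_rel.
apply: in_ideal_nceq (wcomm_nceq _ p_split) _.
apply: in_ideal_nceq (wcomm_cat _ _ _) _; apply: in_ideal_cat; first exact: in_ideal_wcomm.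
apply: in_ideal_nceq (wcomm_anticomm a q) _; apply: in_ideal_sub.
- exact: in_ideal_nceq (nceq_lmulw_mon _ _) (in_ideal_mulr _ sq_ideal).
- exact: in_ideal_nceq (nceq_rmulw_mon _ _) (in_ideal_mull _ sq_ideal).
Qed.

End Ideal.

Section CoefficientSum.
Variables (K : comNzRingType) (S : seq word).
Implicit Types (p r : ncpoly K) (u v w : word).

Definition ncsum p : K := \sum_(w <- S) ncoef p w.

Lemma ncsum_ideal_eq0 (rels : seq (ncpoly K)) p :
  (forall r c u v, r \in rels -> ncsum (ncmul (ncmul (ncmon c u) r) (ncmon 1 v)) = 0) ->
  in_ideal rels p -> ncsum p = 0.
Proof.
move=> rels0 [l [rels_l p_l]]; rewrite /ncsum (eq_bigr _ (fun w _ => p_l w)).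
under eq_bigr do rewrite ncoef_flatten big_map.
rewrite exchange_big big1_seq // => -[[[c u] r] v] /andP[_ lt].
exact: rels0 (allP rels_l _ lt).
Qed.

Lemma ncsum_square (c : K) u a v : all uniq S ->
  ncsum (ncmul (ncmul (ncmon c u) (ncmon 1 [:: a; a])) (ncmon 1 v)) = 0.
Proof.
move=> S_uniq; rewrite /ncsum big1_seq // => w /andP[_ Sw].
rewrite ideal_termE /= ncoef_cons ncoef_nil.
have /negbTE-> : (u ++ [:: a; a]) ++ v != w.
  apply: contraTneq (allP S_uniq w Sw) => <-.
  by rewrite -catA cat_uniq /= inE eqxx !andbF.
by rewrite mulr0 addr0.
Qed.

Lemma ncsum_cubic r (c : K) u v : all (fun w => size w == 3%N) S ->
  nchomog 3 r -> ncsum r = 0 -> ncsum (ncmul (ncmul (ncmon c u) r) (ncmon 1 v)) = 0.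
Proof.
move=> S_size r3 r0; rewrite ideal_termE.
have [/andP[/nilP-> /nilP->]|uv] := boolP (nilp u && nilp v).
  rewrite -[RHS](mulr0 c) -r0 /ncsum big_distrr; apply: eq_bigr => w _.
  rewrite !ncoefE big_map big_distrr; apply: eq_bigr => b _ /=.
  by rewrite cats0 mulr1 mulrA.
rewrite /ncsum big1_seq // => w /andP[_ Sw].
rewrite ncoefE big_map big1_seq // => b /andP[_ rb] /=.
suff /negbTE-> : (u ++ b.2) ++ v != w by rewrite mulr0.
apply/eqP => uvw; move: (allP S_size w Sw) (allP r3 b rb) uv.
rewrite -uvw !size_cat /nilp => /eqP sz_uvw /eqP sz_b.
rewrite sz_b in sz_uvw.
by have [-> ->] : size u = 0%N /\ size v = 0%N by lia.
Qed.

End CoefficientSum.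

Lemma eq_inord n i j : (i <= n)%N -> (j <= n)%N -> (inord i == inord j :> 'I_n.+1) = (i == j).
Proof. by move=> le_in le_jn; rewrite -(inj_eq val_inj) /= !inordK. Qed.

Lemma ord3P (l : 'I_3) : [\/ l = inord 0, l = inord 1 | l = inord 2].
Proof.
case: l => -[|[|[|m]]] lt_l3 //; [constructor 1 | constructor 2 | constructor 3];
  by apply: val_inj; rewrite /= inordK.
Qed.

Lemma e1_letter0 : e1_letter (inord 0) = inord 2. Proof. by rewrite /e1_letter /= inordK. Qed.
Lemma e1_letter1 : e1_letter (inord 1) = inord 0. Proof. by rewrite /e1_letter /= inordK. Qed.
Lemma e1_letter2 : e1_letter (inord 2) = inord 1. Proof. by rewrite /e1_letter /= inordK. Qed.

Lemma e1_letter_inj : injective e1_letter.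
Proof.
by move=> l l'; case: (ord3P l) (ord3P l') => -> [] ->;
  rewrite ?e1_letter0 ?e1_letter1 ?e1_letter2 // => /eqP; rewrite eq_inord.
Qed.

Section Action.
Variables (K : comNzRingType) (om : K).
Implicit Types p q : ncpoly K.

Lemma nceq_act_e1 p q : nceq p q -> nceq (act_e1 p) (act_e1 q).
Proof. exact/nceq_map_word/inj_map/e1_letter_inj. Qed.

Lemma ncoef_act_e2 p w : ncoef (act_e2 om p) w = ncoef p w * \prod_(i <- w) om ^+ val i.
Proof. by rewrite /ncoef big_map big_distrl /=; apply: eq_bigr => t /eqP ->. Qed.

Lemma nceq_act_e2 p q : nceq p q -> nceq (act_e2 om p) (act_e2 om q).
Proof. by move=> pq w; rewrite !ncoef_act_e2 pq. Qed.

Lemma act_gens_fixed p s : nceq (act_e1 p) p -> nceq (act_e2 om p) p ->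
  nceq (act_gens om s p) p.
Proof.
move=> e1p e2p; elim: s => [//|[] s IHs] w /=.
- by rewrite (nceq_act_e1 IHs) e1p.
- by rewrite (nceq_act_e2 IHs) e2p.
Qed.

End Action.

Lemma prim_root3_sqr (R : idomainType) (om : R) :
  3.-primitive_root om -> om ^+ 2 = -1 - om.
Proof.
move=> om_prim; have om_ne1 : om != 1.
  by have: ~~ (3 %| 1)%N by []; rewrite (prim_order_dvd om_prim) expr1.
have : (om - 1) * (om ^+ 2 + om + 1) = om ^+ 3 - 1 by ring.
rewrite (prim_expr_order om_prim) subrr => /eqP.
rewrite mulf_eq0 subr_eq0 (negbTE om_ne1) /= => /eqP om0.
by rewrite -[LHS]subr0 -om0; ring.
Qed.

Section Heisenberg.
Variables (K : comNzRingType) (om A B : K).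

Definition cubic1 : ncpoly K :=
  [:: (A, Z ++ X ++ Y); (A * om, X ++ Y ++ Z); (A * om ^+ 2, Y ++ Z ++ X);
      (B, Y ++ X ++ Z); (B * om, Z ++ Y ++ X); (B * om ^+ 2, X ++ Z ++ Y)].
Definition cubic2 : ncpoly K :=
  [:: (A, Z ++ X ++ Y); (A * om ^+ 2, X ++ Y ++ Z); (A * om, Y ++ Z ++ X);
      (B, Y ++ X ++ Z); (B * om ^+ 2, Z ++ Y ++ X); (B * om, X ++ Z ++ Y)].

Lemma T_relsE :
  T_rels om A B = [:: ncmon 1 (X ++ X); ncmon 1 (Y ++ Y); ncmon 1 (Z ++ Z); cubic1; cubic2].
Proof. by []. Qed.

(* Without the factor 2 the splittings below would need coefficients 1/2. *)
Definition hcubic : ncpoly K :=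
  [:: (2 * A, X ++ Y ++ Z); (2 * A, Y ++ Z ++ X); (2 * A, Z ++ X ++ Y);
      (2 * B, X ++ Z ++ Y); (2 * B, Z ++ Y ++ X); (2 * B, Y ++ X ++ Z)].

Definition cyc_xyz : seq word := [:: X ++ Y ++ Z; Y ++ Z ++ X; Z ++ X ++ Y].
Definition cyc_xzy : seq word := [:: X ++ Z ++ Y; Z ++ Y ++ X; Y ++ X ++ Z].

Hypothesis om2 : om ^+ 2 = -1 - om.

Lemma in_ideal_cubics a b : in_ideal (T_rels om A B) (ncscale a cubic1 ++ ncscale b cubic2).
Proof.
by apply: in_ideal_cat; apply/in_ideal_scale/in_ideal_rel; rewrite T_relsE !inE eqxx ?orbT.
Qed.

Lemma hcubic_splitX : nceq hcubic ((ncscale 1 cubic1 ++ ncscale 1 cubic2) ++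
  (lmulw X [:: (3 * A, Y ++ Z); (3 * B, Z ++ Y)] ++ rmulw X [:: (3 * A, Y ++ Z); (3 * B, Z ++ Y)])).
Proof.
move=> w; rewrite /hcubic /cubic1 /cubic2 /ncscale /lmulw /rmulw /X /Y /Z /=.
by rewrite !ncoef_cons ncoef_nil /=; ring: om2.
Qed.

Lemma hcubic_splitY : nceq hcubic ((ncscale (om ^+ 2) cubic1 ++ ncscale om cubic2) ++
  (lmulw Y [:: (3 * A, Z ++ X); (3 * B, X ++ Z)] ++ rmulw Y [:: (3 * A, Z ++ X); (3 * B, X ++ Z)])).
Proof.
move=> w; rewrite /hcubic /cubic1 /cubic2 /ncscale /lmulw /rmulw /X /Y /Z /=.
by rewrite !ncoef_cons ncoef_nil /=; ring: om2.
Qed.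

Lemma hcubic_splitZ : nceq hcubic ((ncscale om cubic1 ++ ncscale (om ^+ 2) cubic2) ++
  (lmulw Z [:: (3 * A, X ++ Y); (3 * B, Y ++ X)] ++ rmulw Z [:: (3 * A, X ++ Y); (3 * B, Y ++ X)])).
Proof.
move=> w; rewrite /hcubic /cubic1 /cubic2 /ncscale /lmulw /rmulw /X /Y /Z /=.
by rewrite !ncoef_cons ncoef_nil /=; ring: om2.
Qed.

Lemma in_ideal_wcomm_hcubic (l : 'I_3) : in_ideal (T_rels om A B) (wcomm [:: l] hcubic).
Proof.
case: (ord3P l) => ->.
- apply: in_ideal_wcomm_letter (in_ideal_cubics _ _) hcubic_splitX.
  by rewrite T_relsE !inE eqxx.
- apply: in_ideal_wcomm_letter (in_ideal_cubics _ _) hcubic_splitY.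
  by rewrite T_relsE !inE eqxx ?orbT.
- apply: in_ideal_wcomm_letter (in_ideal_cubics _ _) hcubic_splitZ.
  by rewrite T_relsE !inE eqxx ?orbT.
Qed.

Lemma act_e1_hcubic : nceq (act_e1 hcubic) hcubic.
Proof.
move=> w; rewrite /act_e1 /hcubic /X /Y /Z /= !e1_letter0 !e1_letter1 !e1_letter2.
by rewrite !ncoef_cons ncoef_nil /=; ring.
Qed.

Lemma act_e2_hcubic : nceq (act_e2 om hcubic) hcubic.
Proof.
move=> w; rewrite /act_e2 /hcubic /X /Y /Z /= !big_cons big_nil !inordK //.
by rewrite !ncoef_cons ncoef_nil /=; ring: om2.
Qed.

Lemma ncsum_T_rels S p : all uniq S -> all (fun w => size w == 3%N) S ->
  ncsum S cubic1 = 0 -> ncsum S cubic2 = 0 ->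
  in_ideal (T_rels om A B) p -> ncsum S p = 0.
Proof.
move=> S_uniq S_size cubic1_0 cubic2_0; apply: ncsum_ideal_eq0 => r c u v.
rewrite T_relsE !inE => /predU1P[->|/predU1P[->|/predU1P[->|/predU1P[->|/eqP->]]]];
  by [apply: ncsum_square | apply: ncsum_cubic].
Qed.

Lemma ncsum_cyc_xyz :
  [/\ ncsum cyc_xyz cubic1 = 0, ncsum cyc_xyz cubic2 = 0 & ncsum cyc_xyz hcubic = 6 * A].
Proof.
rewrite /ncsum /cyc_xyz /cubic1 /cubic2 /hcubic /X /Y /Z !big_cons !big_nil.
rewrite !ncoef_cons !ncoef_nil /= !eqseq_cons !eq_inord //=.
by split; ring: om2.
Qed.

Lemma ncsum_cyc_xzy :
  [/\ ncsum cyc_xzy cubic1 = 0, ncsum cyc_xzy cubic2 = 0 & ncsum cyc_xzy hcubic = 6 * B].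
Proof.
rewrite /ncsum /cyc_xzy /cubic1 /cubic2 /hcubic /X /Y /Z !big_cons !big_nil.
rewrite !ncoef_cons !ncoef_nil /= !eqseq_cons !eq_inord //=.
by split; ring: om2.
Qed.

Lemma in_ideal_hcubic_eq0 : in_ideal (T_rels om A B) hcubic -> 6 * A = 0 /\ 6 * B = 0.
Proof.
move=> hcubic_ideal; have [xyz1 xyz2 <-] := ncsum_cyc_xyz; have [xzy1 xzy2 <-] := ncsum_cyc_xzy.
by split; apply: ncsum_T_rels hcubic_ideal => //; rewrite /= !inE !eq_inord.
Qed.

Lemma hcubic_central q :
  in_ideal (T_rels om A B) (ncsub (ncmul q hcubic) (ncmul hcubic q)).
Proof. exact/in_ideal_central/in_ideal_wcomm_hcubic. Qed.

Lemma hcubic_invariant s : in_ideal (T_rels om A B) (ncsub (act_gens om s hcubic) hcubic).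
Proof.
apply: (in_ideal_nceq _ (in_ideal_nil _)) => w.
by rewrite ncoef_sub (act_gens_fixed s act_e1_hcubic act_e2_hcubic) subrr ncoef_nil.
Qed.

End Heisenberg.

Theorem mainTheorem2 (R : realType) (om : R[i]) (A B : R[i]) :
  3.-primitive_root om ->
  ~ (A = 0 /\ B = 0) ->
  exists f : ncpoly R[i],
    [/\ nchomog 3 f,
        ~ in_ideal (T_rels om A B) f,
        (forall q : ncpoly R[i],
            in_ideal (T_rels om A B) (ncsub (ncmul q f) (ncmul f q))) &
        (forall s : seq bool,
            in_ideal (T_rels om A B) (ncsub (act_gens om s f) f))].
Proof.
move=> om_prim AB_ne0; have om2 := prim_root3_sqr om_prim.
exists (hcubic A B); split.
- by [].
- move=> /(in_ideal_hcubic_eq0 om2) [/eqP A6 /eqP B6]; apply: AB_ne0.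
  have six_ne0 : (6 : R[i]) != 0 by rewrite pnatr_eq0.
  by rewrite !mulf_eq0 (negbTE six_ne0) in A6 B6; split; apply/eqP.
- exact: hcubic_central.
- exact: hcubic_invariant.
Qed.
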